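(* Let $s,k,g,l$ be indices with $k\ge1$, $1\le l\le k-1$, $r_l\ge r_s$, $0\le g\le n-1$. (a) If there is a job $j<k$ with $r_s\le r_j<r_l$ and $C^{\mathrm{edf}}_{s,j}>r_l$, then $P_{s,k,g,l}=+\infty$. (b) $P_{s,k,g,l}=0$ if and only if $U_{s,k-1,g}\ge r_l$ and every job $j<k$ with $r_s\le r_j<r_l$ satisfies $C^{\mathrm{edf}}_{s,j}\le r_l$.
   Context: Time is discrete (slots $[t,t+1)$). There are $n$ jobs, job $j$ with integer processing time $p_j\ge1$, release time $r_j$, deadline $d_j$; jobs are indexed so that $d_1<\dots<d_n$, release times are pairwise distinct, and the instance is feasible. A (partial, preemptive) schedule assigns to each slot at most one job so that each job it schedules receives exactly $p_j$ slots in $[r_j,d_j)$, with the earliest-deadline property (whenever busy at slot $t$, run the released, not yet completed scheduled job of smallest deadline). $C_{\max}(S)$ is its completion time. For $s\in\{1,\dots,n\}$, $k\in\{0,\dots,n\}$, an $(s,k)$-schedule is a schedule $S$ with $C_{\max}(S)\le d_k$ scheduling exactly the jobs $j\le k$ with $r_s\le r_j<C_{\max}(S)$; the empty schedule counts, with $C_{\max}=r_s$. Gaps of an $(s,k)$-schedule: maximal idle intervals between its blocks (maximal busy intervals), plus the idle interval from $r_s$ to the first block if nonempty; for $t\ge C_{\max}(S)$, the gaps of $S$ with respect to $[r_s,t)$ are its gaps together with $[C_{\max}(S),t)$ if $C_{\max}(S)<t$. $U_{s,k,g}$ is the maximum completion time of an $(s,k)$-schedule with at most $g$ gaps. For $p\ge0$,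 an $(s,k,p)$-schedule is an $(s,k)$-schedule for the modified instance with $r_k$ replaced by $\max\{r_s,r_k\}$ and $p_k$ by $p$. $\mathrm{prevr}_{k'}(t)=\max\{r_j: j\le k',\ r_j<t\}$ ($-\infty$ if no such $j$). $P_{s,k,g,l}$ is the minimum integer $p\ge0$ for which there is an $(s,k,p)$-schedule $S$ with $\mathrm{prevr}_{k-1}(r_l)<C_{\max}(S)\le r_l$ having at most $g$ gaps with respect to $[r_s,r_l)$, and $+\infty$ if none exists. For $r_j\ge r_s$, $C^{\mathrm{edf}}_{s,j}$ is the minimum completion time of job $j$ over all $(s,j)$-schedules that schedule $j$. *)

From mathcomp Require Import all_boot.
From Stdlib Require Import ClassicalEpsilon.
Set Implicit Arguments. Unset Strict Implicit. Unset Printing Implicit Defensive.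

(* An instance: jobs 1..n, processing times p, release times r, deadlines d
   (functions nat -> nat; only values at 1..n matter). Times are nat slots:
   slot t is [t, t+1). A slot assignment sigma : nat -> nat with
   sigma t = 0 meaning "idle" and sigma t = j >= 1 meaning job j runs. *)

Definition slots (sigma : nat -> nat) (j a b : nat) : nat :=
  \sum_(a <= t < b) (sigma t == j).

(* A (partial, preemptive) schedule of the set of jobs J: every job in J
   gets exactly p j slots, all inside [r j, d j); only jobs of J run;
   earliest-deadline property: a busy slot t runs a job whose deadline is
   minimal among the released, not yet completed jobs of J. *)
Definition schedule (n : nat) (p r d : nat -> nat) (J : nat -> Prop)
    (sigma : nat -> nat) : Prop :=
  [/\ (forall j, J j -> 1 <= j <= n),
      (forall t, sigma t != 0 -> J (sigma t)),
      (forall t, sigma t != 0 -> r (sigma t) <= t < d (sigma t)),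
      (forall j, J j -> slots sigma j 0 (d j) = p j) &
      (forall t i, sigma t != 0 -> J i -> r i <= t -> slots sigma i 0 t < p i ->
         d (sigma t) <= d i)].

(* C is the completion time C_max of sigma (last busy slot + 1); for the
   empty schedule the convention C = c0 is used. *)
Definition is_cmax (sigma : nat -> nat) (c0 C : nat) : Prop :=
  ((exists t, sigma t != 0) ->
      [/\ 0 < C, sigma C.-1 != 0 & forall t, C <= t -> sigma t = 0]) /\
  ((forall t, sigma t = 0) -> C = c0).

Definition sk_sched (n : nat) (p r d : nat -> nat) (s k : nat)
    (sigma : nat -> nat) (C : nat) : Prop :=
  [/\ schedule n p r d (fun j => 1 <= j <= k /\ r s <= r j < C) sigma,
      is_cmax sigma (r s) C & C <= d k].

(* number of maximal idle intervals of sigma inside [a,b)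
   (each counted by its left endpoint) *)
Definition ngaps (sigma : nat -> nat) (a b : nat) : nat :=
  \sum_(a <= t < b) ((sigma t == 0) && ((t == a) || (sigma t.-1 != 0))).

Definition U (n : nat) (p r d : nat -> nat) (s k g : nat) : nat :=
  epsilon (inhabits 0%N) (fun u =>
    (exists sigma, sk_sched n p r d s k sigma u /\ ngaps sigma (r s) u <= g) /\
    (forall sigma C, sk_sched n p r d s k sigma C -> ngaps sigma (r s) C <= g ->
       C <= u)).

Definition pmod (p : nat -> nat) (k q : nat) : nat -> nat :=
  fun j => if j == k then q else p j.
Definition rmod (r : nat -> nat) (s k : nat) : nat -> nat :=
  fun j => if j == k then maxn (r s) (r k) else r j.

(* prevr_{k'}(t); None stands for -infinity *)
Definition prevr (r : nat -> nat) (k' t : nat) : option nat :=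
  if [exists j : 'I_k'.+1, (0 < j) && (r j < t)]
  then Some (\max_(j < k'.+1 | (0 < j) && (r j < t)) r j)
  else None.

Definition minf_lt (o : option nat) (C : nat) : Prop :=
  match o with None => True | Some x => x < C end.

Definition P_ok (n : nat) (p r d : nat -> nat) (s k g l q : nat) : Prop :=
  exists sigma C,
    [/\ sk_sched n (pmod p k q) (rmod r s k) d s k sigma C,
        minf_lt (prevr r k.-1 (r l)) C, C <= r l &
        ngaps sigma (r s) (r l) <= g].

(* P_{s,k,g,l}; None stands for +infinity *)
Definition P (n : nat) (p r d : nat -> nat) (s k g l : nat) : option nat :=
  epsilon (inhabits None) (fun o =>
    match o with
    | None => forall q, ~ P_ok n p r d s k g l q
    | Some q => P_ok n p r d s k g l q /\
                forall q', P_ok n p r d s k g l q' -> q <= q'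
    end).

Definition job_completes (sigma : nat -> nat) (j c : nat) : Prop :=
  [/\ 0 < c, sigma c.-1 = j & forall t, c <= t -> sigma t != j].

Definition Cedf_ok (n : nat) (p r d : nat -> nat) (s j c : nat) : Prop :=
  exists sigma C, [/\ sk_sched n p r d s j sigma C, r s <= r j < C &
                      job_completes sigma j c].

(* C^edf_{s,j}; None stands for +infinity (no such schedule) *)
Definition Cedf (n : nat) (p r d : nat -> nat) (s j : nat) : option nat :=
  epsilon (inhabits None) (fun o =>
    match o with
    | None => forall c, ~ Cedf_ok n p r d s j c
    | Some c => Cedf_ok n p r d s j c /\
                forall c', Cedf_ok n p r d s j c' -> c <= c'
    end).

Definition pinf_gt (o : option nat) (x : nat) : Prop :=
  match o with None => True | Some c => x < c end.
Definition pinf_le (o : option nat) (x : nat) : Prop :=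
  match o with None => False | Some c => c <= x end.

Definition feasible (n : nat) (p r d : nat -> nat) : Prop :=
  exists sigma, schedule n p r d (fun j => 1 <= j <= n) sigma.

(* If P_{s,k,g,l} is finite, its witness finishes by r_l and, by the prevr condition, runs
   exactly the jobs j < k released in [r_s, r_l) (and possibly k); keeping only the jobs up to
   j gives an (s,j)-schedule that completes j by r_l, so C^edf_{s,j} <= r_l.  This is (a) and
   one half of (b).
   If P = 0, appending from r_l on an earliest-deadline schedule of the later jobs, kept busy
   as long as a released job is unfinished, yields an (s,k-1)-schedule that ends after r_l
   without a new gap, so U_{s,k-1,g} >= r_l.
   Conversely, C^edf_{s,j} <= r_l for all jobs j < k released in [r_s, r_l) bounds the work
   of those released in [t, r_l) by r_l - t.  Take an optimal (s,k-1)-schedule restricted to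
   these jobs, keep it up to the point f where the remaining work exactly fills [f, r_l), and
   schedule that work greedily: by the work bound the machine stays busy up to r_l and is done
   then, which is a witness for P = 0 with no more gaps. *)

From mathcomp Require Import all_boot zify.
From Stdlib Require Import ClassicalEpsilon Classical.
Set Implicit Arguments. Unset Strict Implicit. Unset Printing Implicit Defensive.

Section Slots.
Variable sigma : nat -> nat.

Lemma slots_cat j a m b : a <= m -> m <= b ->
  slots sigma j a b = slots sigma j a m + slots sigma j m b.
Proof. by move=> am mb; rewrite /slots (big_cat_nat am mb). Qed.

Lemma slotsS j a b : a <= b -> slots sigma j a b.+1 = slots sigma j a b + (sigma b == j).
Proof. by move=> ab; rewrite /slots big_nat_recr. Qed.

Lemma slots_mono j b c : b <= c -> slots sigma j 0 b <= slots sigma j 0 c.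
Proof. by move=> bc; rewrite (slots_cat j (leq0n b) bc) leq_addr. Qed.

Lemma slots_eq0 j a b : (forall u, a <= u < b -> sigma u != j) -> slots sigma j a b = 0.
Proof. by move=> H; rewrite /slots big_nat_cond big1 // => u /andP[/H /negbTE ->]. Qed.

Lemma slots_gt0 j a b : 0 < slots sigma j a b -> exists2 u, a <= u < b & sigma u = j.
Proof.
move=> H; apply: NNPP => Hn; move: H; rewrite slots_eq0 // => u Hu.
by apply/eqP => E; apply: Hn; exists u.
Qed.

End Slots.

Lemma eq_slots f f' j a b : (forall u, (f u == j) = (f' u == j)) ->
  slots f j a b = slots f' j a b.
Proof. by move=> H; apply: eq_bigr => u _; rewrite H. Qed.

Section Schedule.
Variables (n : nat) (p r d : nat -> nat).
Hypothesis Hd : forall i j, 1 <= i -> i < j -> j <= n -> d i < d j.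

Lemma leq_deadline i j : 1 <= i -> i <= j -> j <= n -> d i <= d j.
Proof. by move=> i1 ij jn; case: ltngtP ij => // [lt_ij _|-> //]; exact/ltnW/Hd. Qed.

Lemma schedule_sub J J' s : (forall j, J' j -> J j) -> (forall u, s u != 0 -> J' (s u)) ->
  schedule n p r d J s -> schedule n p r d J' s.
Proof.
move=> JJ' run [h1 _ h3 h4 h5]; split => //.
- by move=> j /JJ'; exact: h1.
- by move=> j /JJ'; exact: h4.
- by move=> t i su /JJ'; exact: h5.
Qed.

Lemma schedule_instance p' r' J s : (forall j, J j -> p' j = p j /\ r' j = r j) ->
  schedule n p' r' d J s -> schedule n p r d J s.
Proof.
move=> E [h1 h2 h3 h4 h5]; split => //.
- by move=> t H; have [_ <-] := E _ (h2 t H); exact: h3.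
- by move=> j Hj; have [<- _] := E _ Hj; exact: h4.
- by move=> t i H Hi; have [<- <-] := E _ Hi; exact: h5.
Qed.

Section OneSchedule.
Variables (J : nat -> Prop) (s : nat -> nat).
Hypothesis Hs : schedule n p r d J s.

Lemma sched_job_range j : J j -> 1 <= j <= n.
Proof. by case: Hs => h1 *; exact: h1. Qed.

Lemma sched_running u : s u != 0 -> J (s u).
Proof. by case: Hs => _ h2 *; exact: h2. Qed.

Lemma sched_window u : s u != 0 -> r (s u) <= u < d (s u).
Proof. by case: Hs => _ _ h3 *; exact: h3. Qed.

Lemma sched_window_of u j : s u = j -> j != 0 -> r j <= u < d j.
Proof. by move=> <-; exact: sched_window. Qed.

Lemma sched_proc j : J j -> slots s j 0 (d j) = p j.
Proof. by case: Hs => _ _ _ h4 *; exact: h4. Qed.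

Lemma sched_edf t i : s t != 0 -> J i -> r i <= t -> slots s i 0 t < p i ->
  d (s t) <= d i.
Proof. by case: Hs => _ _ _ _ h5; exact: h5. Qed.

Lemma sched_job_neq0 j : J j -> j != 0.
Proof. by move=> /sched_job_range; case: j. Qed.

Lemma sched_done_before t i : s t != 0 -> J i -> r i <= t -> d i < d (s t) ->
  p i <= slots s i 0 t.
Proof. by move=> st Ji rit dlt; rewrite leqNgt; apply/negP => /(sched_edf st Ji rit); lia. Qed.

Lemma slots_after_deadline j b : J j -> d j <= b -> slots s j (d j) b = 0.
Proof.
move=> Jj db; apply: slots_eq0 => u /andP[du _]; apply/eqP => E.
by have := sched_window_of E (sched_job_neq0 Jj); lia.
Qed.

Lemma slots_le_proc j b : J j -> slots s j 0 b <= p j.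
Proof.
move=> Jj; case: (leqP b (d j)) => [bd|/ltnW db].
  by rewrite -(sched_proc Jj); exact: slots_mono.
by rewrite (slots_cat s j (leq0n _) db) slots_after_deadline ?addn0 ?sched_proc.
Qed.

Lemma slots_complete j b : J j -> (forall u, b <= u -> s u != j) -> slots s j 0 b = p j.
Proof.
move=> Jj H; case: (leqP b (d j)) => [bd|/ltnW db].
  rewrite -(sched_proc Jj) (slots_cat s j (leq0n b) bd) [slots s j b _]slots_eq0 ?addn0 //.
  by move=> u /andP[bu _]; exact: H.
by rewrite (slots_cat s j (leq0n _) db) slots_after_deadline ?addn0 ?sched_proc.
Qed.

Lemma slots_lt_proc_running j a u : J j -> s u = j -> a <= u -> slots s j 0 a < p j.
Proof.
move=> Jj E au; apply: leq_trans (slots_le_proc u.+1 Jj).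
by rewrite (slotsS _ _ (leq0n u)) E eqxx addn1 ltnS slots_mono.
Qed.

Lemma completed_not_running j a : J j -> p j <= slots s j 0 a -> forall u, a <= u -> s u != j.
Proof.
move=> Jj H u au; apply/eqP => E.
by have := slots_lt_proc_running Jj E au; rewrite ltnNge H.
Qed.

Lemma sched_running_proc_gt0 u : s u != 0 -> 0 < p (s u).
Proof. by move=> su; exact: leq_ltn_trans (slots_lt_proc_running (sched_running su) erefl (leqnn u)). Qed.

Lemma sched_runs j : J j -> 0 < p j -> exists2 u, s u = j & r j <= u < d j.
Proof.
move=> Jj; rewrite -(sched_proc Jj) => /slots_gt0[u _ Eu]; exists u => //.
exact: sched_window_of Eu (sched_job_neq0 Jj).
Qed.

Lemma job_completes_exists j : J j -> 0 < p j -> exists c, job_completes s j c.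
Proof.
move=> Jj pj; have [u Eu _] := sched_runs Jj pj.
have exj : exists u, s u == j by exists u; rewrite Eu.
have ub v : s v == j -> v <= d j.
  by move=> /eqP Ev; have := sched_window_of Ev (sched_job_neq0 Jj); lia.
case: (ex_maxnP exj ub) => v /eqP Ev vmax; exists v.+1; split => // t vt.
by apply/negP => /vmax; lia.
Qed.

End OneSchedule.

Lemma schedule_add_idle_job J s j : schedule n p r d J s -> ~ J j -> 1 <= j <= n ->
  p j = 0 -> schedule n p r d (fun i => J i \/ i = j) s.
Proof.
move=> Hs Jj jn pj; split.
- by move=> i [/(sched_job_range Hs)|->].
- by move=> u /(sched_running Hs); left.
- exact: (sched_window Hs).
- move=> i [/(sched_proc Hs) //|->]; rewrite pj; apply: slots_eq0 => u _.
  have j0 : j != 0 by case/andP: jn; case: (j).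
  by apply/eqP => su; apply: Jj; rewrite -su; apply: (sched_running Hs); rewrite su.
- move=> u i su [Ji|->]; first exact: (sched_edf Hs su Ji).
  by rewrite pj.
Qed.

Definition restrict (s : nat -> nat) (jb : pred nat) : nat -> nat :=
  fun u => if jb (s u) then s u else 0.

Lemma restrict_eq s (jb : pred nat) j u : jb j -> j != 0 -> (restrict s jb u == j) = (s u == j).
Proof.
move=> jbj j0; rewrite /restrict; case: ifP => // Hn.
by rewrite eq_sym (negbTE j0); apply/esym/eqP => E; rewrite E jbj in Hn.
Qed.

Lemma schedule_restrict J s (jb : pred nat) : (forall j, jb j -> J j) ->
  schedule n p r d J s -> schedule n p r d (fun j => jb j) (restrict s jb).
Proof.
move=> HJ Hs; have j0 j : jb j -> j != 0 by move/HJ/(sched_job_neq0 Hs).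
have Eslots i a b : jb i -> slots (restrict s jb) i a b = slots s i a b.
  by move=> jbi; apply: eq_slots => u; rewrite restrict_eq ?j0.
split.
- by move=> j /HJ; exact: (sched_job_range Hs).
- by move=> t; rewrite /restrict; case: ifP => // ->.
- by move=> t; rewrite /restrict; case: ifP => // _; exact: (sched_window Hs).
- by move=> j jbj; rewrite Eslots // (sched_proc Hs (HJ _ jbj)).
- move=> t i; rewrite /restrict; case: ifP => // _ H jbi; rewrite Eslots //.
  exact: (sched_edf Hs H (HJ _ jbi)).
Qed.

Definition glue (s1 s2 : nat -> nat) (m : nat) : nat -> nat :=
  fun u => if u < m then s1 u else s2 u.

(* Jobs of the first schedule are all finished by [m], and those of the second
   are not yet released, so the earliest-deadline property never compares the two. *)
Lemma schedule_glue J1 J2 s1 s2 m :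
  schedule n p r d J1 s1 -> schedule n p r d J2 s2 ->
  (forall u, m <= u -> s1 u = 0) ->
  (forall j, J1 j -> r j < m) -> (forall j, J2 j -> m <= r j) ->
  schedule n p r d (fun j => J1 j \/ J2 j) (glue s1 s2 m).
Proof.
move=> Hs1 Hs2 idle1 r1 r2.
have E1 j : J1 j -> forall u, (glue s1 s2 m u == j) = (s1 u == j).
  move=> J1j u; have j0 := sched_job_neq0 Hs1 J1j.
  rewrite /glue; case: ltnP => // mu; rewrite idle1 // (eq_sym 0 j) (negbTE j0).
  apply/negbTE/eqP => Ej.
  have J2j : J2 j by rewrite -Ej; apply: (sched_running Hs2); rewrite Ej.
  by have := r1 _ J1j; have := r2 _ J2j; lia.
have E2 j : J2 j -> forall u, (glue s1 s2 m u == j) = (s2 u == j).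
  move=> J2j u; have j0 := sched_job_neq0 Hs2 J2j.
  rewrite /glue; case: ltnP => // um.
  have /negbTE -> : s1 u != j.
    apply/eqP => Ej; have J1j : J1 j by rewrite -Ej; apply: (sched_running Hs1); rewrite Ej.
    by have := r1 _ J1j; have := r2 _ J2j; lia.
  apply/esym/negbTE/eqP => Ej.
  by have := sched_window_of Hs2 Ej j0; have := r2 _ J2j; lia.
split.
- by move=> j [/(sched_job_range Hs1)|/(sched_job_range Hs2)].
- by move=> u; rewrite /glue; case: ltnP => _ H; [left; exact: (sched_running Hs1 H)
                                                 | right; exact: (sched_running Hs2 H)].
- by move=> u; rewrite /glue; case: ltnP => _ H; [exact: (sched_window Hs1 H)
                                                 | exact: (sched_window Hs2 H)].
- move=> j [J1j|J2j].
    by rewrite (eq_slots _ _ (E1 _ J1j)) (sched_proc Hs1 J1j).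
  by rewrite (eq_slots _ _ (E2 _ J2j)) (sched_proc Hs2 J2j).
- move=> u i + [J1i|J2i] riu.
    rewrite (eq_slots _ _ (E1 _ J1i)) /glue; case: ltnP => mu H lt.
      exact: (sched_edf Hs1 H J1i riu lt).
    have done1 : slots s1 i 0 u = p i.
      apply: (slots_complete Hs1 J1i) => v uv.
      rewrite idle1; last exact: leq_trans mu uv.
      by rewrite eq_sym (sched_job_neq0 Hs1 J1i).
    by move: lt; rewrite done1 ltnn.
  rewrite (eq_slots _ _ (E2 _ J2i)) /glue; case: ltnP => um H lt.
    by have := r2 _ J2i; lia.
  exact: (sched_edf Hs2 H J2i riu lt).
Qed.

End Schedule.

Definition swap_in (s : nat -> nat) (t t' : nat) : nat -> nat :=
  fun u => if u == t then s t' else if u == t' then 0 else s u.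

Section Swap.
Variables (s : nat -> nat) (t t' : nat).
Hypotheses (idle_t : s t = 0) (busy_t' : s t' != 0) (neq_tt' : t != t').

Lemma slots_swap_in c :
  slots (swap_in s t t') (s t') 0 c + (t' < c) = slots s (s t') 0 c + (t < c).
Proof.
elim: c => [|c IH]; first by rewrite /slots !big_geq.
rewrite !(slotsS _ _ (leq0n c)) !ltnS (leq_eqVlt t' c) (leq_eqVlt t c) (eq_sym t') (eq_sym t).
move: IH; rewrite /swap_in; case: (eqVneq c t) => [->|ct] /=.
  by rewrite idle_t (eq_sym 0) (negbTE busy_t') (negbTE neq_tt') eqxx ltnn; lia.
case: (eqVneq c t') => [->|ct'] /=; first by rewrite eqxx ltnn (eq_sym 0) (negbTE busy_t'); lia.
lia.
Qed.

Lemma swap_in_other j u : j != s t' -> j != 0 -> (swap_in s t t' u == j) = (s u == j).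
Proof.
move=> jt' j0; rewrite /swap_in; case: (eqVneq u t) => [->|_].
  by rewrite idle_t (eq_sym (s t')) (negbTE jt') (eq_sym 0) (negbTE j0).
case: (eqVneq u t') => [->|_] //.
by rewrite (eq_sym 0) (negbTE j0) (eq_sym (s t')) (negbTE jt').
Qed.

End Swap.

Section Fill.
Variables (n : nat) (p r d : nat -> nat).
Hypothesis Hd : forall i j, 1 <= i -> i < j -> j <= n -> d i < d j.
Variable jb : pred nat.
Local Notation sched := (schedule n p r d (fun j => jb j)).

Definition pending (s : nat -> nat) t i := [&& jb i, r i <= t & slots s i 0 t < p i].

Lemma pending_before_deadline s t i : sched s -> pending s t i -> t < d i.
Proof.
move=> Hs /and3P[jbi _ lt]; rewrite ltnNge; apply/negP => /(slots_mono s i).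
by rewrite (sched_proc Hs jbi) leqNgt lt.
Qed.

(* Move the next slot of the pending job of least index (hence least deadline) to [t]. *)
Lemma edf_fill_slot s t : sched s -> (exists i, pending s t i) ->
  exists2 s', sched s' & (forall u, u < t -> s' u = s u) /\ s' t != 0.
Proof.
move=> Hs exP; case: (eqVneq (s t) 0) => [st|st]; last by exists s.
case: (ex_minnP exP) => a /and3P[jba ra lta] amin.
have a0 : a != 0 := sched_job_neq0 Hs jba.
have tda : t < d a by apply: (pending_before_deadline Hs); rewrite /pending jba ra lta.
have : 0 < slots s a t (d a).
  by move: lta; rewrite -(sched_proc Hs jba) (slots_cat s a (leq0n t) (ltnW tda)); lia.
case/slots_gt0 => t' /andP[tt' t'd] st'.
have st'0 : s t' != 0 by rewrite st'.
have neq : t != t' by apply: contraNneq st'0 => <-; rewrite st.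
have lt_tt' : t < t' by rewrite ltn_neqAle neq.
have Sw c := slots_swap_in st st'0 neq c; rewrite st' in Sw.
have Sother j u : j != a -> j != 0 -> (swap_in s t t' u == j) = (s u == j).
  by move=> ja j0; apply: swap_in_other; rewrite ?st'.
have le_slots i u : i != 0 -> slots s i 0 u <= slots (swap_in s t t') i 0 u.
  move=> i0; case: (eqVneq i a) => [->|ia]; first by have := Sw u; lia.
  by rewrite (eq_slots _ _ (fun u => Sother i u ia i0)).
exists (swap_in s t t'); last first.
  by split; rewrite /swap_in ?eqxx ?st' // => u ut; rewrite (ltn_eqF ut) (ltn_eqF (ltn_trans ut lt_tt')).
split.
- exact: (sched_job_range Hs).
- move=> u; rewrite /swap_in; case: (u == t); first by rewrite st'.
  by case: (u == t') => // H; exact: (sched_running Hs H).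
- move=> u; rewrite /swap_in; case: (eqVneq u t) => [->|_].
    by rewrite st' ra /= => _; exact: ltn_trans lt_tt' t'd.
  by case: (u == t') => // H; exact: (sched_window Hs H).
- move=> j jbj; case: (eqVneq j a) => [->|ja].
    by have := Sw (d a); rewrite t'd tda (sched_proc Hs jba); lia.
  by rewrite -(sched_proc Hs jbj) (eq_slots _ _ (fun u => Sother j u ja (sched_job_neq0 Hs jbj))).
- move=> u i + jbi riu lt.
  have lt' := leq_ltn_trans (le_slots i u (sched_job_neq0 Hs jbi)) lt.
  rewrite /swap_in; case: (eqVneq u t) => [eut|_] H.
    subst u; rewrite st'; apply: (leq_deadline Hd).
    - by have := sched_job_range Hs jba; lia.
    - by apply: amin; rewrite /pending jbi riu lt'.
    - by have := sched_job_range Hs jbi; lia.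
  by case: (u == t') H => // H; exact: (sched_edf Hs H jbi riu lt').
Qed.

Lemma no_pending_complete s t : ~ (exists i, pending s t i) ->
  forall i, jb i -> r i <= t -> p i <= slots s i 0 t.
Proof.
move=> nP i jbi rit; rewrite leqNgt; apply/negP => lt.
by apply: nP; exists i; rewrite /pending jbi rit lt.
Qed.

Lemma edf_fill s b E : sched s -> (forall j, jb j -> d j <= E) ->
  exists s' t, [/\ sched s', (forall u, u < b -> s' u = s u), b <= t,
     (forall u, b <= u < t -> s' u != 0) &
     (forall i, jb i -> r i <= t -> p i <= slots s' i 0 t)].
Proof.
move=> Hs dE.
suff fill m t s1 : E - t = m -> sched s1 -> b <= t -> (forall u, u < b -> s1 u = s u) ->
    (forall u, b <= u < t -> s1 u != 0) ->
  exists s' t, [/\ sched s', (forall u, u < b -> s' u = s u), b <= t,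
     (forall u, b <= u < t -> s' u != 0) &
     (forall i, jb i -> r i <= t -> p i <= slots s' i 0 t)].
  by apply: (fill _ b s) => // u; lia.
elim: m t s1 => [|m IH] t s1 Hm Hs1 bt pre busy;
  case: (classic (exists i, pending s1 t i)) => [[i Pi]|/no_pending_complete complete];
  try by exists s1, t.
  by have := pending_before_deadline Hs1 Pi; have := dE i; case/and3P: Pi; lia.
have [s2 Hs2 [pre2 busy2]] := edf_fill_slot Hs1 (ex_intro _ i Pi).
apply: (IH t.+1 s2) => //; try lia.
- by move=> u ub; rewrite pre2 ?pre //; exact: leq_trans ub bt.
- move=> u /andP[bu]; rewrite ltnS leq_eqVlt => /orP[/eqP -> //|ut].
  by rewrite pre2 // busy; rewrite ?bu.
Qed.

End Fill.

Lemma sum_indicator (P : pred nat) N v :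
  \sum_(0 <= j < N | P j) (v == j) = (v < N) && P v.
Proof.
elim: N => [|N IH]; first by rewrite big_geq.
rewrite big_mkcond big_nat_recr //= -big_mkcond IH ltnS (leq_eqVlt v N).
case: (eqVneq v N) => [->|vN] /=; first by rewrite ltnn /=; case: (P N).
by case: (P N); rewrite ?addn0 // eq_sym (negbTE vN) addn0.
Qed.

Lemma sum_slots (P : pred nat) N s a b :
  \sum_(0 <= j < N | P j) slots s j a b = \sum_(a <= u < b) ((s u < N) && P (s u)).
Proof. by rewrite /slots exchange_big_nat; apply: eq_bigr => u _; exact: sum_indicator. Qed.

Lemma sum_slots_le (P : pred nat) N s a b : \sum_(0 <= j < N | P j) slots s j a b <= b - a.
Proof.
rewrite sum_slots -[b - a]muln1 -sum_nat_const_nat.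
by apply: leq_sum => u _; case: (_ && _).
Qed.

Lemma leq_sum_eq (P : pred nat) (E1 E2 : nat -> nat) a b :
  (forall i, P i -> E1 i <= E2 i) ->
  \sum_(a <= i < b | P i) E1 i = \sum_(a <= i < b | P i) E2 i ->
  forall i, a <= i < b -> P i -> E1 i = E2 i.
Proof.
move=> le12 eq12 i ri Pi.
have /eqP : \sum_(a <= j < b | P j) (E2 j - E1 j) = 0 by rewrite sumnB // eq12 subnn.
rewrite sum_nat_seq_eq0 => /allP /(_ i); rewrite mem_index_iota ri Pi => /(_ isT) /eqP.
by have := le12 _ Pi; lia.
Qed.

Definition busy (s : nat -> nat) a b := \sum_(a <= u < b) (s u != 0).

Lemma busy_cat s a m b : a <= m -> m <= b -> busy s a b = busy s a m + busy s m b.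
Proof. by move=> am mb; rewrite /busy (big_cat_nat am mb). Qed.

Lemma busy_full s a b : (forall u, a <= u < b -> s u != 0) -> busy s a b = b - a.
Proof.
move=> H; rewrite /busy -[b - a]muln1 -sum_nat_const_nat big_nat_cond.
by rewrite [RHS]big_nat_cond; apply: eq_bigr => u /andP[/H -> _].
Qed.

Lemma eq_busy s s' a b : (forall u, a <= u < b -> s u = s' u) -> busy s a b = busy s' a b.
Proof. by move=> H; apply: eq_big_nat => u /H ->. Qed.

Lemma busy_eq0 s a b : (forall u, a <= u < b -> s u = 0) -> busy s a b = 0.
Proof. by move=> H; rewrite /busy big_nat_cond big1 // => u /andP[/H -> _]. Qed.

Lemma busy_le s a b : busy s a b <= b - a.
Proof.
rewrite /busy -[b - a]muln1 -sum_nat_const_nat.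
by apply: leq_sum => u _; case: (_ != _).
Qed.

Lemma sum_slots_busy n p r d (jb : pred nat) s a b :
  schedule n p r d (fun j => jb j) s ->
  \sum_(0 <= j < n.+1 | jb j) slots s j a b = busy s a b.
Proof.
move=> Hs; rewrite sum_slots; apply: eq_bigr => u _.
case: (eqVneq (s u) 0) => [->|su] /=.
  by case jb0: (jb 0); rewrite ?andbF //; have := sched_job_range Hs jb0.
have jbu : jb (s u) := sched_running Hs su.
have /andP[_ sun] := sched_job_range Hs jbu.
by rewrite jbu andbT ltnS sun.
Qed.

Lemma sched_idle_after_total n p r d (jb : pred nat) s m :
  schedule n p r d (fun j => jb j) s -> \sum_(0 <= j < n.+1 | jb j) p j <= busy s 0 m ->
  forall u, m <= u -> s u = 0.
Proof.
move=> Hs tot u mu; apply: NNPP => /eqP su.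
have jbu : jb (s u) := sched_running Hs su.
have tot' : \sum_(0 <= j < n.+1 | jb j) slots s j 0 m = \sum_(0 <= j < n.+1 | jb j) p j.
  apply/eqP; rewrite eqn_leq (sum_slots_busy _ _ Hs) tot andbT -(sum_slots_busy _ _ Hs).
  by apply: leq_sum => j jbj; exact: (slots_le_proc Hs).
have full : slots s (s u) 0 m = p (s u).
  apply: (leq_sum_eq _ tot') => //; last by have := sched_job_range Hs jbu; lia.
  by move=> j jbj; exact: (slots_le_proc Hs).
by have := completed_not_running Hs jbu (eq_leq (esym full)) mu; rewrite eqxx.
Qed.

Lemma nat_ivt (F : nat -> nat) a b v : (forall x, F x.+1 <= (F x).+1) -> a <= b ->
  F a <= v <= F b -> exists2 x, a <= x <= b & F x = v.
Proof.
move=> step ab /andP[Fa vFb].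
have ex : exists x, (a <= x) && (v <= F x) by exists b; rewrite ab vFb.
case: (ex_minnP ex) => x /andP[ax vFx] xmin.
exists x; first by rewrite ax xmin // ab vFb.
case: (eqVneq x a) => [exa|xa]; first by subst x; apply/eqP; rewrite eqn_leq Fa vFx.
have [y xy] : exists y, x = y.+1 by exists x.-1; lia.
have Fy : F y < v.
  by rewrite ltnNge; apply/negP => vFy; have := xmin y; rewrite vFy andbT; lia.
by have := step y; rewrite -xy; lia.
Qed.

Lemma eq_ngaps s s' a b : (forall u, u < b -> (s u == 0) = (s' u == 0)) ->
  ngaps s a b = ngaps s' a b.
Proof.
move=> H; apply: eq_big_nat => u /andP[_ ub].
by rewrite H // (H u.-1) //; exact: leq_ltn_trans (leq_pred u) ub.
Qed.

Lemma ngaps_cat_busy s a m b : a <= m -> m <= b -> (forall u, m <= u < b -> s u != 0) ->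
  ngaps s a b = ngaps s a m.
Proof.
move=> am mb H; rewrite /ngaps (big_cat_nat am mb) /= [X in _ + X]big_nat_cond.
by rewrite [X in _ + X]big1 ?addn0 // => u /andP[/H /negbTE ->].
Qed.

Lemma ngaps_mono s a b c : a <= b -> b <= c -> ngaps s a b <= ngaps s a c.
Proof. by move=> ab bc; rewrite /ngaps (big_cat_nat ab bc) leq_addr. Qed.

Definition classic_bool (Q : Prop) : bool := if excluded_middle_informative Q then true else false.

Lemma classic_boolP (Q : Prop) : reflect Q (classic_bool Q).
Proof. by rewrite /classic_bool; case: excluded_middle_informative => ?; constructor. Qed.

Lemma ex_least (Q : nat -> Prop) : (exists c, Q c) ->
  exists c, Q c /\ forall c', Q c' -> c <= c'.
Proof.
case=> c Qc; have exb : exists c, classic_bool (Q c) by exists c; exact/classic_boolP.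
case: (ex_minnP exb) => m /classic_boolP Qm mmin.
by exists m; split => // c' /classic_boolP /mmin.
Qed.

Lemma ex_greatest (Q : nat -> Prop) B : (exists c, Q c) -> (forall c, Q c -> c <= B) ->
  exists c, Q c /\ forall c', Q c' -> c' <= c.
Proof.
case=> c Qc QB; have exb : exists c, classic_bool (Q c) by exists c; exact/classic_boolP.
have ub c' : classic_bool (Q c') -> c' <= B by move/classic_boolP/QB.
case: (ex_maxnP exb ub) => m /classic_boolP Qm mmax.
by exists m; split => // c' /classic_boolP /mmax.
Qed.

(* [P] and [Cedf] are [epsilon] applied to this specification, with [None] as +oo. *)
Definition least (Q : nat -> Prop) (o : option nat) : Prop :=
  match o with
  | None => forall c, ~ Q c
  | Some c => Q c /\ forall c', Q c' -> c <= c'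
  end.

Lemma least_epsilon Q : least Q (epsilon (inhabits None) (least Q)).
Proof.
apply: epsilon_spec; case: (classic (exists c, Q c)) => [/ex_least[c Hc]|nQ].
  by exists (Some c).
by exists None => c Qc; apply: nQ; exists c.
Qed.

Lemma epsilon_least_le Q c : Q c ->
  exists2 c0, epsilon (inhabits None) (least Q) = Some c0 & c0 <= c.
Proof.
move=> Qc; have := least_epsilon Q; case: (epsilon _ _) => [c0 [_ H0]|H].
  by exists c0; last exact: H0.
by case: (H c).
Qed.

Lemma epsilon_least_None Q : (forall c, ~ Q c) -> epsilon (inhabits None) (least Q) = None.
Proof. by move=> H; have := least_epsilon Q; case: (epsilon _ _) => // c0 [/H]. Qed.

Lemma epsilon_least_Some Q c : epsilon (inhabits None) (least Q) = Some c -> Q c.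
Proof. by move=> E; have := least_epsilon Q; rewrite E => -[]. Qed.

Section Cmax.
Variable s : nat -> nat.

Lemma cmax_exists c0 B : (forall u, s u != 0 -> u < B) -> exists C, is_cmax s c0 C.
Proof.
move=> HB; case: (classic (exists u, s u != 0)) => [exP|nP].
  have ub u : s u != 0 -> u <= B by move/HB/ltnW.
  case: (ex_maxnP exP ub) => u su umax; exists u.+1; split => [_|H].
    split => // t ut; apply/eqP; apply: contraTT ut => st.
    by rewrite -ltnNge ltnS umax.
  by have := H u; move/eqP: su.
exists c0; split => // H; case: nP; exact: H.
Qed.

Lemma cmax_idle c0 C : is_cmax s c0 C -> forall u, C <= u -> s u = 0.
Proof.
case=> H1 _ u Cu; case: (classic (exists t, s t != 0)) => [ex|nex].
  by have [_ _ ->] := H1 ex.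
by apply: NNPP => /eqP su; apply: nex; exists u.
Qed.

Lemma cmax_gt c0 C u : is_cmax s c0 C -> s u != 0 -> u < C.
Proof. by move=> H su; rewrite ltnNge; apply: contra su => /(cmax_idle H) ->. Qed.

Lemma cmax_last c0 C u : is_cmax s c0 C -> s u != 0 -> 0 < C /\ s C.-1 != 0.
Proof. by case=> H1 _ su; have [? ? _] := H1 (ex_intro _ u su). Qed.

Lemma is_cmax_of_last c0 C : 0 < C -> s C.-1 != 0 -> (forall u, C <= u -> s u = 0) ->
  is_cmax s c0 C.
Proof. by move=> C0 sC idle; split => // H; have := H C.-1; move/eqP: sC. Qed.

Lemma cmax_empty c0 C : is_cmax s c0 C -> (forall u, s u = 0) -> C = c0.
Proof. by case=> _ H2 H; apply: H2. Qed.

End Cmax.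

Lemma prevr_ltP r k' t C : minf_lt (prevr r k' t) C <->
  forall j, 1 <= j <= k' -> r j < t -> r j < C.
Proof.
rewrite /prevr; case: ifP => [/existsP[j0 /andP[j00 rj0]]|/negbT/existsPn none] /=.
  split => [H j /andP[j1 jk] rjt|H].
    apply: leq_ltn_trans H; have jk' : j < k'.+1 by rewrite ltnS.
    have := leq_bigmax_cond (P := fun i : 'I_k'.+1 => (0 < i) && (r i < t))
                            (F := fun i : 'I_k'.+1 => r i) (Ordinal jk').
    by apply; rewrite /= j1.
  have C0 : 0 < C by have := H j0; have := ltn_ord j0; lia.
  rewrite -(prednK C0) ltnS; apply/bigmax_leqP => i /andP[i0 rit].
  by have := H i; have := ltn_ord i; lia.
split=> // _ j /andP[j1 jk] rjt; have jk' : j < k'.+1 by rewrite ltnS.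
by have := none (Ordinal jk'); rewrite /= j1 rjt.
Qed.

Lemma rmod_s r s k : rmod r s k s = r s.
Proof. by rewrite /rmod; case: eqP => // ->; rewrite maxnn. Qed.

Lemma rmod_ne r s k j : j != k -> rmod r s k j = r j.
Proof. by rewrite /rmod => /negbTE ->. Qed.

Lemma pmod_ne p k q j : j != k -> pmod p k q j = p j.
Proof. by rewrite /pmod => /negbTE ->. Qed.

Lemma U_spec n p r d s K g : r s <= d K ->
  (exists sg, sk_sched n p r d s K sg (U n p r d s K g) /\
              ngaps sg (r s) (U n p r d s K g) <= g) /\
  (forall sg C, sk_sched n p r d s K sg C -> ngaps sg (r s) C <= g -> C <= U n p r d s K g).
Proof.
move=> rsd; pose Q c := exists sg, sk_sched n p r d s K sg c /\ ngaps sg (r s) c <= g.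
apply: (epsilon_spec (inhabits 0)
  (fun u => Q u /\ forall sg C, sk_sched n p r d s K sg C -> ngaps sg (r s) C <= g -> C <= u)).
have Q0 : Q (r s).
  exists (fun _ => 0); split; last by rewrite /ngaps big_geq.
  split => //; last by split => // [[t]]; rewrite eqxx.
  by split => // j [_ /andP[rsj rjs]]; lia.
have QB c : Q c -> c <= d K by case=> sg [[_ _ ->]].
have [c [Qc cmax]] := ex_greatest (ex_intro _ _ Q0) QB.
by exists c; split => // sg C Hsg ng; apply: cmax; exists sg.
Qed.

Section ZeroProcessingTime.
Variables (n : nat) (p r d : nat -> nat).
Hypothesis Hp : forall j, 1 <= j <= n -> 0 < p j.
Hypothesis Hd : forall i j, 1 <= i -> i < j -> j <= n -> d i < d j.
Hypothesis Hfeas : feasible n p r d.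
Variables (s k g l : nat).
Hypothesis Hk : 1 <= k <= n.
Hypothesis Hl : 1 <= l <= k - 1.
Hypothesis Hrl : r s <= r l.

Lemma release_lt_deadline j : 1 <= j <= n -> r j < d j.
Proof. by case: Hfeas => tau Htau jn; have [u _] := sched_runs Htau jn (Hp jn); lia. Qed.

Lemma rl_lt_deadline j : l <= j <= n -> r l < d j.
Proof.
move=> /andP[lj jn]; have l1 : 1 <= l <= n by lia.
by apply: leq_trans (release_lt_deadline l1) (leq_deadline Hd _ lj jn); lia.
Qed.

Lemma rs_le_dK : r s <= d k.-1.
Proof. by apply: leq_trans Hrl (ltnW (rl_lt_deadline _)); lia. Qed.

Lemma P_witness_Cedf q sg C :
  sk_sched n (pmod p k q) (rmod r s k) d s k sg C ->
  minf_lt (prevr r k.-1 (r l)) C -> C <= r l ->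
  forall j, 1 <= j < k -> r s <= r j < r l -> exists2 c, Cedf_ok n p r d s j c & c <= r l.
Proof.
move=> [Hsg Hcm _] /prevr_ltP pv Cl j /andP[j1 jk] /andP[rsj rjl].
have rjC : r j < C by apply: pv; lia.
pose jb i := [&& 1 <= i <= j, r s <= r i & r i < C].
have Hsj : schedule n p r d (fun i => jb i) (restrict sg jb).
  apply: (schedule_instance (p' := pmod p k q) (r' := rmod r s k)).
    by move=> i /and3P[/andP[_ ij] _ _]; rewrite pmod_ne ?rmod_ne //; lia.
  apply: (schedule_restrict _ Hsg) => i /and3P[/andP[i1 ij] rsi riC].
  by rewrite rmod_s rmod_ne; [split; [lia | rewrite rsi riC] | lia].
have jbj : jb j by rewrite /jb leqnn j1 rsj rjC.
have pj : 0 < p j by apply: Hp; lia.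
have ltC u : restrict sg jb u != 0 -> u < C.
  by rewrite /restrict; case: ifP => // _; exact: (cmax_gt Hcm).
have [C1 HC1] := cmax_exists (r s) ltC.
have run_before i : jb i -> r i < C1.
  move=> jbi; have [u su /andP[riu _]] := sched_runs Hsj jbi (Hp (sched_job_range Hsj jbi)).
  by apply: leq_ltn_trans riu (cmax_gt HC1 _); rewrite su (sched_job_neq0 Hsj jbi).
have [u su _] := sched_runs Hsj jbj pj.
have [C10 lastC1] : 0 < C1 /\ restrict sg jb C1.-1 != 0.
  by apply: (cmax_last HC1 (u := u)); rewrite su; lia.
have C1C : C1 <= C by rewrite -(prednK C10); exact: ltC.
have Hsk : sk_sched n p r d s j (restrict sg jb) C1.
  split => //.
  - apply: schedule_sub (Hsj) => [i [i1 /andP[rsi riC1]]|v /(sched_running Hsj) jbv].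
      by rewrite /jb i1 rsi (leq_trans riC1 C1C).
    by case/and3P: (jbv) => ? ? _; split => //; rewrite (run_before _ jbv) andbT.
  - have /and3P[/andP[i1 ij] _ _] := sched_running Hsj lastC1.
    have /andP[_ dl] := sched_window Hsj lastC1.
    rewrite -(prednK C10); apply: leq_trans dl (leq_deadline Hd i1 ij _); lia.
have [c [c0 sc notj]] := job_completes_exists Hsj jbj pj.
exists c; first by exists (restrict sg jb), C1; split => //; rewrite rsj run_before.
have : restrict sg jb c.-1 != 0 by rewrite sc; lia.
by move/(cmax_gt HC1); lia.
Qed.

Lemma P_None : (exists j, [/\ 1 <= j < k, r s <= r j < r l & pinf_gt (Cedf n p r d s j) (r l)]) ->
  P n p r d s k g l = None.
Proof.
case=> j [jk rj late]; apply: epsilon_least_None => q [sg [C [Hsk pv Cl _]]].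
have [c /epsilon_least_le[c0 E c0c] cl] := P_witness_Cedf Hsk pv Cl jk rj.
by move: late; rewrite /Cedf E /=; lia.
Qed.

Lemma P_eq0_Cedf : P n p r d s k g l = Some 0 ->
  forall j, 1 <= j < k -> r s <= r j < r l -> pinf_le (Cedf n p r d s j) (r l).
Proof.
move=> /epsilon_least_Some [sg [C [Hsk pv Cl _]]] j jk rj.
have [c /epsilon_least_le[c0 E c0c] cl] := P_witness_Cedf Hsk pv Cl jk rj.
by rewrite /Cedf E /=; lia.
Qed.

Definition early j := [&& 1 <= j <= k.-1, r s <= r j & r j < r l].
Definition late j := (1 <= j <= k.-1) && (r l <= r j).

Lemma early_range j : early j -> 1 <= j <= n.
Proof. by case/and3P; lia. Qed.

Lemma early_neq_k j : early j -> j != k.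
Proof. by case/and3P; lia. Qed.

Lemma P_witness_early sg C :
  sk_sched n (pmod p k 0) (rmod r s k) d s k sg C ->
  minf_lt (prevr r k.-1 (r l)) C -> C <= r l -> schedule n p r d (fun j => early j) sg.
Proof.
move=> [Hsg _ _] /prevr_ltP pv Cl.
apply: (schedule_instance (p' := pmod p k 0) (r' := rmod r s k)).
  by move=> j /early_neq_k jk; rewrite pmod_ne ?rmod_ne.
apply: schedule_sub (Hsg) => [j ej|u su].
  have jk := early_neq_k ej; case/and3P: ej => j1 rsj rjl.
  by rewrite rmod_s rmod_ne //; split; [lia | rewrite rsj pv].
have [/andP[u1 uk] /andP[]] := sched_running Hsg su.
have /eqP suk : sg u != k.
  by apply: contraTneq (sched_running_proc_gt0 Hsg su) => ->; rewrite /pmod eqxx.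
rewrite rmod_s rmod_ne; last exact/eqP.
by move=> rsu ruC; rewrite /early rsu (leq_trans ruC Cl) andbT; lia.
Qed.

Lemma early_schedule_P_ok sx : schedule n p r d (fun j => early j) sx ->
  (forall u, r l <= u -> sx u = 0) -> ngaps sx (r s) (r l) <= g ->
  P_ok n p r d s k g l 0.
Proof.
move=> Hsx idle ng.
have ub u : sx u != 0 -> u < r l by rewrite ltnNge; apply: contra => /idle ->.
have [C HC] := cmax_exists (rmod r s k s) ub.
have run_before j : early j -> r j < C.
  move=> ej; have [u su /andP[rju _]] := sched_runs Hsx ej (Hp (early_range ej)).
  by apply: leq_ltn_trans rju (cmax_gt HC _); rewrite su (sched_job_neq0 Hsx ej).
have [rsC Cl] : r s <= C /\ C <= r l.
  case: (classic (exists u, sx u != 0)) => [[u su]|none].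
    have ej := sched_running Hsx su; have [C0 sC] := cmax_last HC su.
    by have := run_before _ ej; have := ub _ sC; case/and3P: ej; lia.
  rewrite (cmax_empty HC) ?rmod_s //.
  by move=> u; apply: NNPP => /eqP su; apply: none; exists u.
have Hk0 : schedule n (pmod p k 0) (rmod r s k) d (fun j => early j \/ j = k) sx.
  apply: schedule_add_idle_job; rewrite /pmod ?eqxx //; last by move/early_neq_k/eqP.
  apply: schedule_instance (Hsx) => j /early_neq_k jk.
  by rewrite (negbTE jk) rmod_ne.
exists sx, C; split => //.
- split => //.
  + apply: schedule_sub (Hk0) => [j [jk /andP[rsj rjC]]|u su].
      case: (eqVneq j k) => [->|jk']; [by right | left].
      move: rsj rjC; rewrite rmod_s rmod_ne // => rsj rjC.
      by rewrite /early rsj (leq_trans rjC Cl) andbT; move/eqP: jk'; lia.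
    have ej := sched_running Hsx su; have jk := early_neq_k ej.
    by rewrite rmod_s rmod_ne // run_before //; case/and3P: ej => ? -> _; split => //; lia.
  + by apply: leq_trans Cl (ltnW (rl_lt_deadline _)); lia.
- apply/prevr_ltP => j j1 rjl; case: (leqP (r s) (r j)) => rsj; last exact: leq_trans rsj rsC.
  by apply: run_before; rewrite /early j1 rsj.
Qed.

Lemma late_schedule : exists s2 t,
  [/\ schedule n p r d (fun j => late j && (r j < t)) s2, r l < t,
      (forall u, r l <= u < t -> s2 u != 0) & (forall u, t <= u -> s2 u = 0)].
Proof.
case: Hfeas => tau Htau.
have Hlate : schedule n p r d (fun j => late j) (restrict tau late).
  by apply: schedule_restrict Htau => j /andP[]; lia.
have dn j : late j -> d j <= d n by case/andP=> jk _; apply: (leq_deadline Hd); lia.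
have [ts [t [Hts _ rlt fill_busy fill_done]]] := edf_fill Hd (r l) Hlate dn.
have late_l : late l by rewrite /late leqnn; lia.
have rl_t : r l < t.
  rewrite ltn_neqAle rlt andbT; apply/eqP => tl; have := fill_done l late_l.
  have pl : 0 < p l by apply: Hp; lia.
  rewrite -tl leqnn slots_eq0 => [|u /andP[_ ul]]; first by lia.
  by apply/eqP => E; have := sched_window_of Hts E (sched_job_neq0 Hts late_l); lia.
pose jb j := late j && (r j < t).
exists (restrict ts jb), t; split => //.
- by apply: schedule_restrict Hts => j /andP[].
- move=> u ut; have su := fill_busy u ut; have ls := sched_running Hts su.
  by rewrite /restrict /jb ls; have := sched_window Hts su; case: ifP => // /negbT; lia.
- move=> u tu; rewrite /restrict; case: ifP => // /andP[lj rjt].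
  by have := completed_not_running Hts lj (fill_done _ lj (ltnW rjt)) tu; rewrite eqxx.
Qed.

Lemma P_eq0_U : P n p r d s k g l = Some 0 -> r l <= U n p r d s k.-1 g.
Proof.
move=> /epsilon_least_Some [sg [C [Hsk pv Cl ng]]].
have Hearly := P_witness_early Hsk pv Cl.
have idle u : r l <= u -> sg u = 0.
  by case: Hsk => _ Hcm _ lu; apply: (cmax_idle Hcm); exact: leq_trans Cl lu.
have [s2 [t [Hs2 rlt busy2 idle2]]] := late_schedule.
pose sg' := glue sg s2 (r l).
have Hglue : schedule n p r d (fun j => early j \/ late j && (r j < t)) sg'.
  apply: schedule_glue Hearly Hs2 idle _ _; first by move=> j /and3P[].
  by move=> j /andP[/andP[]].
have busy' u : r l <= u < t -> sg' u != 0.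
  by move=> /andP[lu ut]; rewrite /sg' /glue ltnNge lu /= busy2 ?lu.
have jobs j : (early j \/ late j && (r j < t)) <-> (1 <= j <= k.-1 /\ r s <= r j < t).
  rewrite /early /late; split => [[/and3P[? -> ?]|/andP[/andP[? ?] ?]]|[? /andP[? ?]]].
  - by split => //; lia.
  - by split => //; apply/andP; split => //; lia.
  - case: (ltnP (r j) (r l)) => ?; first by left; apply/and3P.
    by right; apply/andP; split => //; apply/andP.
have t0 : 0 < t by lia.
have last_busy : sg' t.-1 != 0 by apply: busy'; lia.
have Hsk' : sk_sched n p r d s k.-1 sg' t.
  split.
  - by apply: schedule_sub (Hglue) => [j /jobs|u /(sched_running Hglue) /jobs].
  - apply: is_cmax_of_last => // u tu.
    by rewrite /sg' /glue ifN ?idle2 // -leqNgt; exact: leq_trans (ltnW rlt) tu.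
  - have [/andP[j1 jk] _] := (jobs _).1 (sched_running Hglue last_busy).
    have /andP[_ dl] := sched_window Hglue last_busy.
    by rewrite -(prednK t0); apply: leq_trans dl (leq_deadline Hd j1 jk _); lia.
have gaps : ngaps sg' (r s) t <= g.
  rewrite (ngaps_cat_busy Hrl (ltnW rlt) busy') (@eq_ngaps _ sg) // => u ul.
  by rewrite /sg' /glue ul.
have [_ Umax] := U_spec n p g rs_le_dK.
exact: leq_trans (ltnW rlt) (Umax _ _ Hsk' gaps).
Qed.

Section Workload.
Hypothesis HC : forall j, 1 <= j < k -> r s <= r j < r l -> pinf_le (Cedf n p r d s j) (r l).

Definition workload a b := \sum_(0 <= j < n.+1 | early j && (a <= r j < b)) p j.

Lemma workload_cat a m b : a <= m -> m <= b -> workload a b = workload a m + workload m b.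
Proof.
move=> am mb; rewrite /workload (bigID (fun j => r j < m)) /=.
by congr (_ + _); apply: eq_bigl => j; case: (early j) => //=; lia.
Qed.

Lemma Cedf_witness_complete j c T CT i : sk_sched n p r d s j T CT -> job_completes T j c ->
  1 <= i <= j -> r s <= r i < c -> slots T i 0 c = p i.
Proof.
move=> [HT HTc _] [c0 Tc notj] /andP[i1 ij] /andP[rsi ric].
have Tc0 : T c.-1 != 0 by rewrite Tc; lia.
have /andP[_ jn] := sched_job_range HT (sched_running HT Tc0); rewrite Tc in jn.
have Ji : 1 <= i <= j /\ r s <= r i < CT.
  by split; [lia | rewrite rsi (leq_trans ric) //; rewrite -(prednK c0); exact: cmax_gt HTc Tc0].
case: (eqVneq i j) => [eij|neq]; first by subst i; exact: (slots_complete HT Ji).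
have lt_ij : i < j by rewrite ltn_neqAle neq ij.
have ric' : r i <= c.-1 by lia.
have := sched_done_before HT Tc0 Ji ric'; rewrite Tc => /(_ (Hd i1 lt_ij jn)).
have := slots_le_proc HT c Ji; have := slots_mono T i (leq_pred c); lia.
Qed.

(* The C^edf-schedule of the last-indexed early job released from [t] on completes
   every early job released in [t, c) within [t, c). *)
Lemma workload_window t : (exists j, early j && (t <= r j)) ->
  exists c, [/\ t < c, c <= r l & workload t c <= c - t].
Proof.
move=> ex; have ub j : early j && (t <= r j) -> j <= n by case/andP => /early_range; lia.
case: (ex_maxnP ex ub) => j /andP[ej tj] jmax.
have /and3P[/andP[j1 jk] rsj rjl] := ej.
have jk' : 1 <= j < k by lia.
have rj : r s <= r j < r l by rewrite rsj rjl.
have := HC jk' rj; rewrite /Cedf; case E: (epsilon _ _) => [c|] //= cl.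
have [T [CT [Hsk _ comp]]] := epsilon_least_Some E.
have [[HT _ _] [c0 Tc _]] := (Hsk, comp).
have tc : t < c by have := sched_window_of HT Tc (lt0n_neq0 j1); lia.
exists c; split => //; rewrite /workload (eq_bigr (fun i => slots T i t c)) ?sum_slots_le //.
move=> i /andP[ei /andP[ti ric]]; have /and3P[/andP[i1 _] rsi _] := ei.
have ij : i <= j by apply: jmax; rewrite ei ti.
have doneT : slots T i 0 c = p i by apply: (Cedf_witness_complete Hsk comp); lia.
have notbefore : slots T i 0 t = 0.
  apply: slots_eq0 => u /andP[_ ut]; apply/eqP => Ei.
  by have := sched_window_of HT Ei (lt0n_neq0 i1); lia.
by rewrite -doneT (slots_cat T i (leq0n t) (ltnW tc)) notbefore.
Qed.

Lemma workload_bound t : t <= r l -> workload t (r l) + t <= r l.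
Proof.
suff bound m : r l - t <= m -> t <= r l -> workload t (r l) + t <= r l by exact: bound.
elim: m t => [|m IH] t Hm tl;
  (case: (classic (exists j, early j && (t <= r j))) => [ex|none];
   last by rewrite /workload big1 // => j /andP[ej /andP[tj _]]; case: none; exists j; rewrite ej).
  by case: ex => j /andP[/and3P[_ _ jl] tj]; lia.
have [c [tc cl wc]] := workload_window ex.
have Hc : r l - c <= m by lia.
by rewrite (workload_cat (ltnW tc) cl); have := IH c Hc cl; lia.
Qed.

Lemma early_fill_reaches sx f t : schedule n p r d (fun j => early j) sx -> r s <= f <= t ->
  (forall u, f <= u < t -> sx u != 0) ->
  (forall i, early i -> r i <= t -> p i <= slots sx i 0 t) ->
  busy sx 0 f + r l = workload (r s) (r l) + f -> r l <= t.
Proof.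
move=> Hsx /andP[rsf ft] busyft complete bal; rewrite leqNgt; apply/negP => tl.
have bt : busy sx 0 t = busy sx 0 f + (t - f).
  by rewrite (busy_cat _ (leq0n f) ft) (busy_full busyft).
have released_done : workload (r s) t.+1 <= busy sx 0 t.
  rewrite -(sum_slots_busy _ _ Hsx) [X in _ <= X](bigID (fun i => r s <= r i < t.+1)) /=.
  apply: leq_trans (leq_addr _ _); apply: leq_sum => i /andP[ei /andP[_ rit]].
  exact: complete.
have rst : r s <= t.+1 by lia.
move: bal; rewrite (workload_cat rst tl); have := workload_bound tl; lia.
Qed.

Lemma early_schedule_exists : r l <= U n p r d s k.-1 g ->
  exists sx, [/\ schedule n p r d (fun j => early j) sx, (forall u, r l <= u -> sx u = 0)
              & ngaps sx (r s) (r l) <= g].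
Proof.
move=> HU; have [[S [[HS _ _] ngS]] _] := U_spec n p g rs_le_dK.
have HSX : schedule n p r d (fun j => early j) (restrict S early).
  apply: schedule_restrict HS => j /and3P[jk rsj rjl].
  by split => //; rewrite rsj (leq_trans rjl HU).
set SX := restrict S early in HSX.
have SX_zero u : u < r l -> (SX u == 0) = (S u == 0).
  move=> ul; rewrite /SX /restrict; case: ifP => // nej; rewrite eqxx; apply/esym/eqP.
  apply: NNPP => /eqP su; move: nej; have [/andP[j1 jk] /andP[rsj _]] := sched_running HS su.
  by have := sched_window HS su; rewrite /early rsj; lia.
set w := workload (r s) (r l).
have w_sum : w = \sum_(0 <= j < n.+1 | early j) p j.
  by apply: eq_bigl => j; rewrite /early; lia.
have busy_rs : busy SX 0 (r s) = 0.
  apply: busy_eq0 => u /andP[_ urs]; apply: NNPP => /eqP su.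
  by have := sched_window HSX su; case/and3P: (sched_running HSX su); lia.
have busy_rl : busy SX 0 (r l) <= w.
  rewrite w_sum -(sum_slots_busy _ _ HSX).
  by apply: leq_sum => j ej; exact: (slots_le_proc HSX).
have [f /andP[rsf fl] balf] : exists2 f, r s <= f <= r l & w + f - busy SX 0 f = r l.
  apply: (nat_ivt (F := fun x => w + x - busy SX 0 x)) => //.
    move=> x; have := busy_cat SX (leq0n x) (leqnSn x); have := busy_le SX x x.+1.
    by have := busy_le SX 0 x; lia.
  by rewrite busy_rs; have := workload_bound (leqnn (r l)); have := workload_bound Hrl; lia.
have dn j : early j -> d j <= d n by case/and3P=> jk _ _; apply: (leq_deadline Hd); lia.
have [sx [t [Hsx pre ft fill_busy fill_done]]] := edf_fill Hd f HSX dn.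
have busy_f : busy sx 0 f = busy SX 0 f by apply: eq_busy => u /andP[_ uf]; exact: pre.
have bal : busy sx 0 f + r l = w + f by have := busy_le SX 0 f; lia.
have tl : r l <= t by apply: early_fill_reaches Hsx _ fill_busy fill_done bal; rewrite rsf.
have busy_fl u : f <= u < r l -> sx u != 0 by case/andP=> fu ul; apply: fill_busy; lia.
exists sx; split => //.
  apply: (sched_idle_after_total Hsx); rewrite -w_sum (busy_cat _ (leq0n f) fl) busy_f.
  by rewrite (busy_full busy_fl); lia.
rewrite (ngaps_cat_busy rsf fl busy_fl) (@eq_ngaps _ S) => [|u uf]; last first.
  by rewrite pre // SX_zero //; exact: leq_trans uf fl.
by apply: leq_trans ngS; apply: ngaps_mono rsf (leq_trans fl HU).
Qed.

End Workload.

Lemma P_eq0_of_U : r l <= U n p r d s k.-1 g ->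
  (forall j, 1 <= j < k -> r s <= r j < r l -> pinf_le (Cedf n p r d s j) (r l)) ->
  P n p r d s k g l = Some 0.
Proof.
move=> HU HC; have [sx [Hsx idle ng]] := early_schedule_exists HC HU.
have [c0 E] := epsilon_least_le (early_schedule_P_ok Hsx idle ng).
by rewrite leqn0 /P E => /eqP ->.
Qed.

End ZeroProcessingTime.

Theorem lemma9 (n : nat) (p r d : nat -> nat)
  (Hp : forall j, 1 <= j <= n -> 0 < p j)
  (Hd : forall i j, 1 <= i -> i < j -> j <= n -> d i < d j)
  (Hr : forall i j, 1 <= i <= n -> 1 <= j <= n -> r i = r j -> i = j)
  (Hfeas : feasible n p r d)
  (s k g l : nat)
  (Hs : 1 <= s <= n) (Hk : 1 <= k <= n) (Hl : 1 <= l <= k - 1)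
  (Hrl : r s <= r l) (Hg : g <= n - 1) :
  ((exists j, [/\ 1 <= j < k, r s <= r j < r l & pinf_gt (Cedf n p r d s j) (r l)]) ->
     P n p r d s k g l = None) /\
  (P n p r d s k g l = Some 0 <->
     r l <= U n p r d s (k - 1) g /\
     (forall j, 1 <= j < k -> r s <= r j < r l -> pinf_le (Cedf n p r d s j) (r l))).
Proof.
split; first exact: (P_None Hp Hd g Hk Hl Hrl).
rewrite subn1; split => [P0|[HU HC]]; last exact: (P_eq0_of_U Hp Hd Hfeas Hk Hl Hrl HU HC).
split; first exact: (P_eq0_U Hp Hd Hfeas Hk Hl Hrl P0).
exact: (P_eq0_Cedf Hp Hd Hk Hl Hrl P0).
Qed.
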